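(* Let $\mathfrak{M}=(S,\mathcal{L})$ be a partial linear space and let $\mathcal{H}$ be a flappy hyperplane of $\mathfrak{M}$. Then $\mathcal{H}$ is spiky.
   Context: A partial linear space is a pair $(S,\mathcal{L})$ where $\mathcal{L}$ is a family of subsets of $S$ (lines) such that every line has at least two points, every point lies on some line, and two distinct lines share at most one point. Points $a,b$ are collinear ($a\sim b$) if some line contains both; $[a]_\sim$ denotes the set of points collinear with $a$. A subspace is a set $X\subseteq S$ such that every line meeting $X$ in at least two points is contained in $X$. A hyperplane is a proper subspace meeting every line. A set $X\subseteq S$ is spiky if every point $a\in X$ is collinear with some point $b\notin X$; it is flappy if for every line $L\subseteq X$ there is a point $a\notin X$ with $L\subseteq[a]_\sim$. *)

(* Sets of points are predicates P -> Prop; a family of lines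
   is a predicate on such sets. The point set S is the whole type P. *)

Definition pset (P : Type) := P -> Prop.

Definition partial_linear_space (P : Type) (Lines : pset P -> Prop) : Prop :=
  (forall L, Lines L -> exists a b, L a /\ L b /\ a <> b) /\
  (forall a : P, exists L, Lines L /\ L a) /\
  (forall L M a b, Lines L -> Lines M -> L a -> L b -> M a -> M b -> a <> b ->
     (forall x, L x <-> M x)).

Definition collinear {P : Type} (Lines : pset P -> Prop) (a b : P) : Prop :=
  exists L, Lines L /\ L a /\ L b.

Definition subspace {P : Type} (Lines : pset P -> Prop) (X : pset P) : Prop :=
  forall L, Lines L ->
    (exists a b, L a /\ L b /\ X a /\ X b /\ a <> b) ->
    forall x, L x -> X x.

Definition hyperplane {P : Type} (Lines : pset P -> Prop) (X : pset P) : Prop :=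
  subspace Lines X /\ (exists a, ~ X a) /\
  (forall L, Lines L -> exists a, L a /\ X a).

Definition spiky {P : Type} (Lines : pset P -> Prop) (X : pset P) : Prop :=
  forall a, X a -> exists b, ~ X b /\ collinear Lines a b.

Definition flappy {P : Type} (Lines : pset P -> Prop) (X : pset P) : Prop :=
  forall L, Lines L -> (forall x, L x -> X x) ->
    exists a, ~ X a /\ forall x, L x -> collinear Lines a x.

From Stdlib Require Import Classical.

(* Put a point of H on some line L. If L leaves H, a point of L outside H is
   collinear with it; if L lies in H, flappiness yields a point outside H
   collinear with all of L. *)

Section Spiky.

Variables (P : Type) (Lines : pset P -> Prop) (X : pset P).

Lemma collinear_outside_of_line_not_in L a :
  Lines L -> L a -> ~ (forall x, L x -> X x) ->
  exists b, ~ X b /\ collinear Lines a b.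
Proof.
  intros HL La Hout.
  apply not_all_ex_not in Hout as [b Hb].
  apply imply_to_and in Hb as [Lb Xb].
  exists b; split; [exact Xb | now exists L].
Qed.

Lemma collinear_outside_of_flappy_line L a :
  flappy Lines X -> Lines L -> L a -> (forall x, L x -> X x) ->
  exists b, ~ X b /\ collinear Lines a b.
Proof.
  intros Hfl HL La Hin.
  destruct (Hfl L HL Hin) as [b [Xb Hcol]].
  destruct (Hcol a La) as [M [HM [Mb Ma]]].
  exists b; split; [exact Xb | now exists M].
Qed.

Lemma flappy_spiky :
  (forall a : P, exists L, Lines L /\ L a) ->
  flappy Lines X -> spiky Lines X.
Proof.
  intros Hcover Hfl a _.
  destruct (Hcover a) as [L [HL La]].
  destruct (classic (forall x, L x -> X x)) as [Hin | Hout].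
  - exact (collinear_outside_of_flappy_line L a Hfl HL La Hin).
  - exact (collinear_outside_of_line_not_in L a HL La Hout).
Qed.

End Spiky.

Theorem lemma1p1 (P : Type) (Lines : pset P -> Prop) (H : pset P) :
  partial_linear_space P Lines ->
  hyperplane Lines H -> flappy Lines H -> spiky Lines H.
Proof.
  intros [_ [Hcover _]] _ Hfl.
  exact (flappy_spiky P Lines H Hcover Hfl).
Qed.
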